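(* Let $n\ge 2$ and let $L = sl(n,\mathbb{C}) = \{X\in\mathbb{C}^{n\times n} \mid \operatorname{tr} X = 0\}$. Let $g$ be an inner automorphism of $L$ of order $2$, i.e. $g(X) = AXA^{-1}$ for some $A\in SL(n,\mathbb{C})$, with $g\neq \mathrm{Id}$ and $g^2=\mathrm{Id}$, and let $L = L_0 \oplus L_1$ be the associated $\mathbb{Z}_2$-grading, where $L_0 = \{X : g(X)=X\}$ and $L_1=\{X: g(X) = -X\}$. Then every finite-dimensional irreducible representation $r: L\to \operatorname{End} V$ is compatible with this $\mathbb{Z}_2$-grading, i.e. there exists a decomposition $V = V_0\oplus V_1$ into subspaces such that $r(X_i)V_j\subseteq V_{i+j}$ for all $i,j\in\mathbb{Z}_2$ and all $X_i\in L_i$.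
   Context: For a Lie algebra $L$ with a $G$-grading $L=\bigoplus_{i\in G}L_i$ ($G$ an abelian group, $[L_i,L_j]\subseteq L_{i+j}$), a representation $r:L\to\operatorname{End}V$ is called compatible with the $G$-grading if there is a direct sum decomposition $V=\bigoplus_{i\in G}V_i$ with $r(X_i)V_j\subseteq V_{i+j}$ for all $i,j\in G$ and all $X_i\in L_i$. *)

From HB Require Import structures.
From mathcomp Require Import all_boot all_order all_algebra.
From mathcomp Require Import complex.
From mathcomp Require Import reals.
Set Implicit Arguments. Unset Strict Implicit. Unset Printing Implicit Defensive.
Import Order.TTheory GRing.Theory Num.Theory.
Local Open Scope ring_scope.

Section SlDefs.
Variable F : fieldType.

Definition in_sl (n : nat) (X : 'M[F]_n) : Prop := \tr X = 0.

Definition lie_br (n : nat) (X Y : 'M[F]_n) : 'M[F]_n := X *m Y - Y *m X.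

(* r : sl(n) -> End(F^m) is a representation (values of r outside sl(n)
   are irrelevant): linear on sl(n) and preserving brackets. Endomorphisms
   of V = F^m are m x m matrices acting on column vectors. *)
Definition is_sl_rep (n m : nat) (r : 'M[F]_n -> 'M[F]_m) : Prop :=
  (forall (a : F) (X Y : 'M[F]_n), in_sl X -> in_sl Y ->
     r (a *: X + Y) = a *: r X + r Y) /\
  (forall X Y : 'M[F]_n, in_sl X -> in_sl Y ->
     r (lie_br X Y) = lie_br (r X) (r Y)).

(* A subspace of V = F^m is represented (mxalgebra style) by the row space of
   a matrix U; a column vector v belongs to it iff v^T lies in the row space.
   M maps subspace U into subspace W iff (M v)^T = v^T M^T lies in W for
   every v in U. *)
Definition maps_into (m : nat) (M U W : 'M[F]_m) : Prop :=
  (U *m M^T <= W)%MS.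

Definition irreducible_rep (n m : nat) (r : 'M[F]_n -> 'M[F]_m) : Prop :=
  (0 < m)%N /\
  forall U : 'M[F]_m,
    (forall X : 'M[F]_n, in_sl X -> maps_into (r X) U U) ->
    (U == (0 : 'M[F]_m))%MS \/ row_full U.

Definition grade0 (n : nat) (A X : 'M[F]_n) : Prop :=
  in_sl X /\ A *m X *m invmx A = X.
Definition grade1 (n : nat) (A X : 'M[F]_n) : Prop :=
  in_sl X /\ A *m X *m invmx A = - X.

Definition compatible_Z2 (n m : nat) (A : 'M[F]_n) (r : 'M[F]_n -> 'M[F]_m)
  : Prop :=
  exists V0 V1 : 'M[F]_m,
    mxdirect (V0 + V1) /\ row_full (V0 + V1)%MS /\
    (forall X, grade0 A X -> maps_into (r X) V0 V0 /\ maps_into (r X) V1 V1) /\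
    (forall X, grade1 A X -> maps_into (r X) V0 V1 /\ maps_into (r X) V1 V0).

End SlDefs.

From mathcomp Require Import all_boot all_algebra.
From mathcomp Require Import complex.
From mathcomp Require Import reals.
Set Implicit Arguments. Unset Strict Implicit. Unset Printing Implicit Defensive.
Import GRing.Theory Num.Theory.
Local Open Scope ring_scope.

(* Since g is an involutive inner automorphism, A^2 commutes with sl(n) and is
   therefore scalar, so a rescaling B of A is an involution.  The traceless
   part H of B satisfies [H, X] = 0 on L_0, while L_1 is spanned by
   eigenvectors of ad H for the eigenvalues 2 and -2.  Hence r(X) commutes
   with r(H) for X in L_0 and shifts the eigenvalues of r(H) by 2 or -2 for X
   in L_1.  Grouping the generalized eigenspaces of r(H) according to the
   parity of floor(Re(lambda / 2)) therefore grades V. *)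

Definition floor_parity {R : realType} (z : R[i]) : bool :=
  odd (absz (Num.floor (complex.Re z))).

Lemma odd_absz_add1 (k : int) : odd (absz (k + 1)) = ~~ odd (absz k).
Proof.
case: k => [n|[|n]] //=; first by rewrite addn1.
by rewrite subSS subn0 negbK.
Qed.

Lemma floor_parityD1 (R : realType) (z : R[i]) :
  floor_parity (z + 1) = ~~ floor_parity z.
Proof.
rewrite /floor_parity.
have -> : complex.Re (z + 1) = complex.Re z + 1 by case: z.
by rewrite floorDrz ?intr_int // floor1 odd_absz_add1.
Qed.

Lemma parity_flip_addN (F : zmodType) (par : F -> bool) (c : F) :
  (forall z, par (z + c) = ~~ par z) -> forall z, par (z - c) = ~~ par z.
Proof. by move=> flip z; rewrite -[in RHS](subrK c z) flip negbK. Qed.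

Lemma coprimep_prod_XsubC (F : fieldType) (rs : seq F) (P Q : pred F)
    (f : F -> F) :
  (forall z w, P z -> Q w -> f w != z) ->
  coprimep (\prod_(z <- rs | P z) ('X - z%:P))
           (\prod_(w <- rs | Q w) ('X - (f w)%:P)).
Proof.
move=> f_out_P.
apply: (big_ind (coprimep _)) => [|p q cop_p cop_q|w Qw].
- exact: coprimep1.
- by rewrite coprimepMr cop_p cop_q.
rewrite coprimep_XsubC -big_filter root_prod_XsubC mem_filter.
by apply/negP => /andP[/f_out_P/(_ Qw)]; rewrite eqxx.
Qed.

Lemma horner_mx_prod_XsubC_shift (F : fieldType) (m' : nat) (g y : 'M[F]_m'.+1)
    (c : F) (rs : seq F) (P : pred F) :
  y *m g = (g + c%:M) *m y ->
  y *m horner_mx g (\prod_(z <- rs | P z) ('X - (z + c)%:P)) =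
  horner_mx g (\prod_(z <- rs | P z) ('X - z%:P)) *m y.
Proof.
move=> yg; rewrite !rmorph_prod.
apply: (big_ind2 (fun a b => y *m a = b *m y)) => [|a1 a2 b1 b2 e1 e2|z _].
- by rewrite mulmx1 mul1mx.
- by rewrite -!mulmxE mulmxA e1 -mulmxA e2 mulmxA.
rewrite !rmorphB /= !horner_mx_X !horner_mx_C mulmxBr mulmxBl yg.
by rewrite scalar_mxC raddfD !mulmxDl opprD addrACA subrr addr0.
Qed.

Lemma kermxpoly_mul_sub (F : fieldType) (m' : nat) (g y : 'M[F]_m'.+1)
    (p q s : {poly F}) :
  y *m horner_mx g s = horner_mx g p *m y ->
  horner_mx g (p * q) = 0 -> coprimep p s ->
  (kermxpoly g p *m y <= kermxpoly g q)%MS.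
Proof.
move=> ys pq0 /Bezout_eq1_coprimepP[[u v] /= uv1].
apply/sub_kermxP; rewrite /kermxpoly; set K := kermx _.
rewrite -[q]mul1r -uv1 mulrDl rmorphD mulmxDr -mulrA [v * s * q]mulrAC.
rewrite [v * q * s]mulrC !(rmorphM (horner_mx g) _ (_ * q)) /= pq0 mulr0.
rewrite mulmx0 add0r rmorphM /= -!mulmxE.
by rewrite !mulmxA -[K *m y *m _](mulmxA K) [y *m _]ys mulmxA mulmx_ker !mul0mx.
Qed.

Section ParitySpaces.
Variables (F : closedFieldType) (par : F -> bool) (m' : nat).
Variables (g : 'M[F]_m'.+1) (rs : seq F).
Hypothesis char_poly_g : char_poly g = \prod_(z <- rs) ('X - z%:P).

Definition par_factor (b : bool) := \prod_(z <- rs | par z == b) ('X - z%:P).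

Definition par_space (b : bool) := kermxpoly g (par_factor b).

Lemma horner_par_factor_eq0 b :
  horner_mx g (par_factor b * par_factor (~~ b)) = 0.
Proof.
rewrite -[RHS](Cayley_Hamilton g) char_poly_g (bigID (fun z => par z == b)) /=.
by congr (horner_mx g (_ * _)); apply: eq_bigl => z; case: (par z); case: b.
Qed.

Lemma coprimep_par_factor b : coprimep (par_factor b) (par_factor (~~ b)).
Proof.
apply: coprimep_prod_XsubC => z w /eqP <- /eqP par_w; apply/eqP => wz.
by move: par_w; rewrite wz; case: (par z).
Qed.

Lemma par_space_direct : mxdirect (par_space false + par_space true).
Proof. exact/mxdirect_addsP/mxdirect_kermxpoly/coprimep_par_factor. Qed.

Lemma par_space_full : row_full (par_space false + par_space true).
Proof.
rewrite -sub1mx -(kermxpolyM g (coprimep_par_factor false)) /kermxpoly.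
by rewrite horner_par_factor_eq0 kermx0 submx_refl.
Qed.

Lemma par_space_comm_stable b (y : 'M_m'.+1) :
  y *m g = g *m y -> (par_space b *m y <= par_space b)%MS.
Proof. by move=> yg; apply: comm_mx_stable_kermxpoly. Qed.

Lemma par_space_shift b (y : 'M_m'.+1) (c : F) :
  (forall z, par (z + c) = ~~ par z) -> y *m g = (g + c%:M) *m y ->
  (par_space b *m y <= par_space (~~ b))%MS.
Proof.
move=> flip yg.
apply: (kermxpoly_mul_sub (s := \prod_(z <- rs | par z == b) ('X - (z + c)%:P))).
- exact: horner_mx_prod_XsubC_shift.
- exact: horner_par_factor_eq0.
apply: coprimep_prod_XsubC => z w /eqP <- /eqP par_w; apply/eqP => wcz.
by move: (flip w); rewrite wcz par_w; case: (par z).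
Qed.

End ParitySpaces.

Lemma char_poly_split (F : closedFieldType) (m' : nat) (g : 'M[F]_m'.+1) :
  exists rs : seq F, char_poly g = \prod_(z <- rs) ('X - z%:P).
Proof.
have [rs ->] := closed_field_poly_normal (char_poly g).
by exists rs; rewrite (monicP (char_poly_monic g)) scale1r.
Qed.

Lemma scalar_mx_comm_traceless (F : fieldType) (n' : nat) (M : 'M[F]_n'.+2) :
  (forall X : 'M_n'.+2, \tr X = 0 -> M *m X = X *m M) -> M = (M ord0 ord0)%:M.
Proof.
move=> commM.
have tr_delta (i j : 'I_n'.+2) : i != j -> \tr (delta_mx i j : 'M[F]_n'.+2) = 0.
  move=> ij; rewrite /mxtrace big1 // => t _; rewrite mxE.
  by case: (t =P i) => [ti|//]; rewrite -ti in ij; rewrite (negbTE ij).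
have col_entry (i j k : 'I_n'.+2) : i != j -> M k i = (k == i)%:R * M j j.
  move=> ij; have := congr1 (fun Z : 'M[F]_n'.+2 => Z k j) (commM _ (tr_delta i j ij)).
  rewrite !mxE (bigD1 i) //= big1 => [|t /negbTE ti]; last by rewrite mxE ti mulr0.
  rewrite (bigD1 j) //= big1 => [|t /negbTE tj]; last by rewrite mxE tj andbF mul0r.
  by rewrite !mxE !eqxx mulr1 !addr0 !andbT => ->.
have diag_const (j : 'I_n'.+2) : M j j = M ord0 ord0.
  have [->//|j0] := eqVneq j ord0.
  by rewrite (col_entry ord0 j ord0) ?eqxx ?mul1r // eq_sym.
apply/matrixP => k l; rewrite mxE (col_entry l (lift l ord0) k (neq_lift l ord0)).
by rewrite diag_const; case: (k == l); rewrite ?mul1r ?mul0r.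
Qed.

Lemma conj_involutive_sqr_scalar (F : fieldType) (n' : nat) (A : 'M[F]_n'.+2) :
  A \in unitmx ->
  (forall X, \tr X = 0 -> A *m (A *m X *m invmx A) *m invmx A = X) ->
  exists2 c : F, c != 0 & A *m A = c%:M.
Proof.
move=> unitA invol.
have commAA X : \tr X = 0 -> (A *m A) *m X = X *m (A *m A).
  move=> trX; rewrite -{2}(invol X trX) mulmxA mulmxKV //.
  by rewrite -[A *m (A *m X *m invmx A) *m A]mulmxA mulmxKV // mulmxA.
exists ((A *m A) ord0 ord0); last exact: scalar_mx_comm_traceless.
apply: contraTneq unitA => c0.
have : \det (A *m A) = 0.
  by rewrite (scalar_mx_comm_traceless commAA) c0 det_scalar expr0n.
rewrite det_mulmx unitmxE => /eqP; rewrite mulf_eq0 orbb => /eqP ->.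
by rewrite unitr0.
Qed.

Lemma scalar_sqr_rescale (F : numClosedFieldType) (n : nat) (A : 'M[F]_n)
    (c : F) :
  c != 0 -> A *m A = c%:M -> exists2 a : F, a != 0 & (a *: A) *m (a *: A) = 1%:M.
Proof.
move=> c0 AAc; have s0 : sqrtC c != 0 by rewrite sqrtC_eq0.
exists (sqrtC c)^-1; first by rewrite invr_eq0.
rewrite -scalemxAl -scalemxAr scalerA AAc scale_scalar_mx -expr2 exprVn sqrtCK.
by rewrite mulVf.
Qed.

Lemma lie_br_subr_scalar (F : fieldType) (n : nat) (B Y : 'M[F]_n) (a : F) :
  lie_br (B - a%:M) Y = lie_br B Y.
Proof. by rewrite /lie_br mulmxBl mulmxBr scalar_mxC opprB addrA subrK. Qed.

Lemma lie_brZr (F : fieldType) (n : nat) (B Y : 'M[F]_n) (a : F) :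
  lie_br B (a *: Y) = a *: lie_br B Y.
Proof. by rewrite /lie_br scalerBr scalemxAr scalemxAl. Qed.

Lemma mxtrace_anticomm (F : numFieldType) (n : nat) (B X : 'M[F]_n) :
  B *m X = - (X *m B) -> \tr (B *m X) = 0.
Proof.
move=> BX; have : \tr (B *m X) *+ 2 = 0.
  by rewrite mulr2n {2}BX raddfN /= mxtrace_mulC subrr.
by move/eqP; rewrite mulrn_eq0 /= => /eqP.
Qed.

(* With Y = B X one has [B, X + Y] = 2 (X + Y) and [B, X - Y] = -2 (X - Y). *)
Lemma involution_anticomm_eigen (F : numFieldType) (n : nat) (B X : 'M[F]_n) :
  B *m B = 1%:M -> B *m X = - (X *m B) -> \tr X = 0 ->
  exists Xp Xm : 'M_n, [/\ \tr Xp = 0, \tr Xm = 0, X = Xp + Xm,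
    lie_br B Xp = 2 *: Xp & lie_br B Xm = - 2 *: Xm].
Proof.
move=> BB BX trX; set Y := B *m X.
have BY : B *m Y = X by rewrite /Y mulmxA BB mul1mx.
have XB : X *m B = - Y by rewrite /Y BX opprK.
have YB : Y *m B = - X by rewrite /Y -mulmxA XB mulmxN BY.
have trY : \tr Y = 0 by exact: mxtrace_anticomm.
exists (2^-1 *: (X + Y)), (2^-1 *: (X - Y)); split.
- by rewrite mxtraceZ raddfD /= trX trY addr0 mulr0.
- by rewrite mxtraceZ raddfB /= trX trY subr0 mulr0.
- rewrite -scalerDr addrACA subrr addr0 -mulr2n -scaler_nat scalerA.
  by rewrite mulVf ?scale1r ?pnatr_eq0.
- rewrite lie_brZr /lie_br mulmxDr mulmxDl BY XB YB -/Y scalerA mulrC -scalerA.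
  by rewrite scaler_nat mulr2n opprB opprK [Y + X]addrC.
rewrite lie_brZr /lie_br mulmxBr mulmxBl BY XB YB -/Y scalerA mulrC -scalerA.
by rewrite scaleNr scaler_nat mulr2n opprB opprK opprD opprB [- X + Y]addrC.
Qed.

Lemma sl_grading_element (F : numClosedFieldType) (n' : nat) (A : 'M[F]_n'.+2) :
  A \in unitmx ->
  (forall X, \tr X = 0 -> A *m (A *m X *m invmx A) *m invmx A = X) ->
  exists H : 'M[F]_n'.+2, [/\ \tr H = 0,
    forall X, A *m X *m invmx A = X -> lie_br H X = 0 &
    forall X, \tr X = 0 -> A *m X *m invmx A = - X ->
      exists Xp Xm, [/\ \tr Xp = 0, \tr Xm = 0, X = Xp + Xm,
        lie_br H Xp = 2 *: Xp & lie_br H Xm = - 2 *: Xm]].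
Proof.
move=> unitA invol.
have [c c0 AAc] := conj_involutive_sqr_scalar unitA invol.
have [a a0 BB] := scalar_sqr_rescale c0 AAc; set B := a *: A in BB.
have n0 : (n'.+2)%:R != 0 :> F by rewrite pnatr_eq0.
exists (B - (\tr B / (n'.+2)%:R)%:M); split.
- by rewrite raddfB /= mxtrace_scalar -[_ *+ n'.+2]mulr_natr divfK // subrr.
- move=> X fixX; have AX : A *m X = X *m A by rewrite -{2}fixX mulmxKV.
  by rewrite lie_br_subr_scalar /lie_br /B -scalemxAl -scalemxAr AX subrr.
move=> X trX oppX; have AX : A *m X = - (X *m A) by rewrite -mulNmx -oppX mulmxKV.
have BX : B *m X = - (X *m B) by rewrite /B -scalemxAl -scalemxAr AX scalerN.
have [Xp [Xm [trXp trXm defX brXp brXm]]] := involution_anticomm_eigen BB BX trX.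
by exists Xp, Xm; rewrite !lie_br_subr_scalar.
Qed.

Lemma maps_intoD (F : fieldType) (m : nat) (M N U W : 'M[F]_m) :
  maps_into M U W -> maps_into N U W -> maps_into (M + N) U W.
Proof. by rewrite /maps_into raddfD mulmxDr; apply: addmx_sub. Qed.

Section SlRep.
Variables (F : fieldType) (n m : nat) (r : 'M[F]_n -> 'M[F]_m).
Hypothesis r_rep : is_sl_rep r.

Let in_sl0 : in_sl (0 : 'M[F]_n). Proof. exact: mxtrace0. Qed.

Lemma sl_rep0 : r 0 = 0.
Proof.
have := r_rep.1 1 0 0 in_sl0 in_sl0; rewrite addr0 !scale1r => r0.
by apply: (addrI (r 0)); rewrite addr0 -r0.
Qed.

Lemma sl_repD X Y : in_sl X -> in_sl Y -> r (X + Y) = r X + r Y.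
Proof. by move=> slX slY; have := r_rep.1 1 X Y slX slY; rewrite !scale1r. Qed.

Lemma sl_repZ a X : in_sl X -> r (a *: X) = a *: r X.
Proof.
by move=> slX; have := r_rep.1 a X 0 slX in_sl0; rewrite !addr0 sl_rep0 addr0.
Qed.

(* In the row-vector convention of [maps_into], r X shifts the eigenvalues
   of (r H)^T by c. *)
Lemma sl_rep_eigen H X c : in_sl H -> in_sl X -> lie_br H X = c *: X ->
  (r X)^T *m (r H)^T = ((r H)^T + c%:M) *m (r X)^T.
Proof.
move=> slH slX brHX; have := r_rep.2 H X slH slX.
rewrite brHX sl_repZ // /lie_br => rbr.
rewrite -tr_scalar_mx -raddfD -!trmx_mul; congr (_^T).
by rewrite mulmxDr mul_mx_scalar rbr addrC subrK.
Qed.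

Lemma sl_rep_comm H X : in_sl H -> in_sl X -> lie_br H X = 0 ->
  (r X)^T *m (r H)^T = (r H)^T *m (r X)^T.
Proof.
move=> slH slX brHX; have := @sl_rep_eigen H X 0 slH slX.
by rewrite brHX scale0r raddf0 addr0 => ->.
Qed.

End SlRep.

Theorem theorem2 (R : realType) (n m : nat) (A : 'M[R[i]]_n)
  (r : 'M[R[i]]_n -> 'M[R[i]]_m) :
  (2 <= n)%N ->
  \det A = 1 ->
  (exists X : 'M[R[i]]_n, in_sl X /\ A *m X *m invmx A <> X) ->
  (forall X : 'M[R[i]]_n, in_sl X ->
     A *m (A *m X *m invmx A) *m invmx A = X) ->
  is_sl_rep r ->
  irreducible_rep r ->
  compatible_Z2 A r.
Proof.
move=> n_ge2 detA _ invol r_rep [m_gt0 _].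
case: n n_ge2 A r detA invol r_rep => [|[|n']] // _ A r detA invol r_rep.
case: m m_gt0 r r_rep => [//|m'] _ r r_rep.
have unitA : A \in unitmx by rewrite unitmxE detA unitr1.
have [H [trH brH0 brH1]] := sl_grading_element unitA invol.
have [rs char_rs] := char_poly_split (r H)^T.
pose par (z : R[i]) := floor_parity (z / 2).
have flip2 z : par (z + 2) = ~~ par z.
  by rewrite /par mulrDl divff ?pnatr_eq0 ?floor_parityD1.
pose V b := par_space par (r H)^T rs b.
exists (V false), (V true).
split; [exact: par_space_direct | split; [exact: par_space_full | split]].
- move=> X [slX fixX]; have comm := sl_rep_comm r_rep trH slX (brH0 X fixX).
  by split; apply: par_space_comm_stable.
move=> X [slX oppX].
have [Xp [Xm [trXp trXm -> brXp brXm]]] := brH1 X slX oppX.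
have shp := sl_rep_eigen r_rep trH trXp brXp.
have shm := sl_rep_eigen r_rep trH trXm brXm.
have flipN2 := parity_flip_addN flip2.
rewrite (sl_repD r_rep trXp trXm).
by split; apply: maps_intoD;
  [exact: par_space_shift flip2 shp | exact: par_space_shift flipN2 shm
  | exact: par_space_shift flip2 shp | exact: par_space_shift flipN2 shm].
Qed.
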